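(* Let $M$ be a finite monoid in $\mathbf{DG}$, $X,Y\in\Lambda(M)$ with idempotent generators $e_X,e_Y$. Then $m\in\mathrm{Irr}_{\mathscr K(M)}(e_X,e_Y)$ if and only if: (1) $e_X=e_R(m)$; (2) $e_Y=e_L(m)$; (3) $m\notin\nabla Y\nabla X$; (4) $m$ is a null element.
   Context: $E(M)$ idempotents. $M$ is rectangular if each $\{f\in E(M):MfM=MeM\}$ is closed under multiplication; $M\in\mathbf{DG}$ if it is rectangular and $MeM=MfM$ implies $e=f$ for idempotents. $\Lambda(M)$ is the set of ideals $MeM$, $e\in E(M)$. $\nabla X=\{m: X\not\subseteq MmM\}$, $\nabla Y\nabla X=\{ab: a\in\nabla Y, b\in\nabla X\}$. $\mathrm{St}_L(m)=\{n:nm=m\}$, $\mathrm{St}_R(m)=\{n: mn=m\}$ are submonoids in $\mathbf{DG}$; $e_L(m)$, $e_R(m)$ denote the unique idempotent in the minimal ideal of $\mathrm{St}_L(m)$, $\mathrm{St}_R(m)$ respectively. $m$ is null if $m\notin mMm$. $\mathscr K(M)$: objects $E(M)$, morphisms $e\to f$ elements of $fMe$, composition the product; a morphism is irreducible if it is neither a split mono nor a split epi and whenever it factors as $gh$, $h$ is a split mono or $g$ a split epi; $\mathrm{Irr}_{\mathscr K(M)}(e,f)$ is the set of these. *)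

From mathcomp Require Import all_boot.
Set Implicit Arguments. Unset Strict Implicit. Unset Printing Implicit Defensive.

Record finMonoid := FinMonoid {
  mcarrier :> finType;
  mmul : mcarrier -> mcarrier -> mcarrier;
  mone : mcarrier;
  mmulA : associative mmul;
  mul1m : left_id mone mmul;
  mulm1 : right_id mone mmul }.

Section Defs.
Variable M : finMonoid.
Local Notation "x * y" := (mmul x y).

Definition idem (e : M) : bool := e * e == e.

Definition J (a : M) : {set M} := [set (x * a) * y | x : M, y : M].

Definition rectangular : Prop :=
  forall e f g : M, idem e -> idem f -> idem g -> J f = J e -> J g = J e ->
    idem (f * g) /\ J (f * g) = J e.

Definition inDG : Prop :=
  rectangular /\ forall e f : M, idem e -> idem f -> J e = J f -> e = f.

Definition Lambda (X : {set M}) : Prop := exists2 e : M, idem e & X = J e.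

Definition nabla (X : {set M}) : {set M} := [set m : M | ~~ (X \subset J m)].

Definition nablaprod (Y X : {set M}) : {set M} :=
  [set a * b | a in nabla Y, b in nabla X].

Definition StL (m : M) : {set M} := [set n : M | n * m == m].
Definition StR (m : M) : {set M} := [set n : M | m * n == m].

Definition is_ideal_of (S I : {set M}) : bool :=
  (I \subset S) &&
  [forall s in S, forall i in I, (s * i \in I) && (i * s \in I)].

Definition minideal (S : {set M}) : {set M} :=
  [set k in S | [forall I : {set M}, (is_ideal_of S I && (I != set0)) ==> (k \in I)]].

(* the unique idempotent of the minimal ideal of St_L(m), St_R(m)
   (unique when M is in DG; default 1 otherwise) *)
Definition eL (m : M) : M := odflt (mone M) [pick e in minideal (StL m) | idem e].
Definition eR (m : M) : M := odflt (mone M) [pick e in minideal (StR m) | idem e].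

Definition null (m : M) : Prop := ~ exists x : M, m = (m * x) * m.

(* the category K(M): objects E(M), morphisms e -> f are elements of fMe *)
Definition hom (e f : M) (m : M) : Prop := exists x : M, m = (f * x) * e.

Definition split_mono (e g h : M) : Prop := exists2 r : M, hom g e r & r * h = e.
Definition split_epi (g f k : M) : Prop := exists2 s : M, hom f g s & k * s = f.

Definition irreducible (e f m : M) : Prop :=
  [/\ hom e f m, ~ split_mono e f m, ~ split_epi e f m &
      forall (g h k : M), idem g -> hom e g h -> hom g f k -> m = k * h ->
        split_mono e g h \/ split_epi g f k].

End Defs.

(* A morphism h : e -> g of K(M) is a split mono exactly when MeM is
   contained in MhM, and dually for split epis: this is the stability of
   finite monoids (MaM = MbM together with a in Mb forces b in Ma), proved with
   an idempotent power.  An irreducible m therefore cannot factor through the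
   identity as (f a)(b e) with a, b in the nablas, nor through the idempotent
   y m when m = m x m (y = e x f), and factoring it through eR m (resp. eL m)
   shows that e and eR m generate the same ideal, so they coincide in DG; only
   this uniqueness half of the definition of DG is needed.  Conversely a null
   m is never split, and a factorization with no split factor exhibits m as an
   element of nablaprod. *)

From mathcomp Require Import all_boot.
Set Implicit Arguments. Unset Strict Implicit. Unset Printing Implicit Defensive.

Section Powers.
Variable M : finMonoid.
Local Notation "x * y" := (mmul x y).

Definition mpow (t : M) (n : nat) : M := iter n (mmul t) (mone M).

Lemma mpowD (t : M) a b : mpow t (a + b) = mpow t a * mpow t b.
Proof.
elim: a => [|a IH] /=; first by rewrite add0n mul1m.
by rewrite IH mmulA.
Qed.

Lemma mpowSr (t : M) n : mpow t n.+1 = mpow t n * t.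
Proof. by rewrite -addn1 mpowD /= mulm1. Qed.

Lemma mpow_repeat (t : M) : exists i j, (i < j)%N /\ mpow t i = mpow t j.
Proof.
pose f (i : 'I_#|M|.+1) := mpow t i.
have /injectivePn [i [j nij fij]] : ~~ injectiveb f.
  by apply/negP=> /injectiveP/leq_card; rewrite card_ord ltnn.
by case: (ltngtP i j) nij => [lt_ij|lt_ji|/val_inj->]; rewrite ?eqxx //= => _;
  [exists i, j | exists j, i].
Qed.

Lemma exists_idem_mpow (t : M) : exists2 n, (0 < n)%N & idem (mpow t n).
Proof.
have [i [j [lt_ij tij]]] := mpow_repeat t.
have [p p_gt0 def_j] : exists2 p, (0 < p)%N & j = (i + p)%N.
  by exists (j - i)%N; rewrite ?subn_gt0 ?subnKC // ltnW.
have step b : (i <= b)%N -> mpow t (b + p) = mpow t b.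
  by move=> le_ib; rewrite -(subnK le_ib) -addnA -def_j !mpowD tij.
have periodic c b : (i <= b)%N -> mpow t (b + c * p) = mpow t b.
  move=> le_ib; elim: c => [|c IH]; first by rewrite mul0n addn0.
  by rewrite mulSn addnA addnAC step ?IH // (leq_trans le_ib) ?leq_addr.
exists (p * i.+1)%N; first by rewrite muln_gt0 p_gt0.
rewrite /idem -mpowD mulnC periodic //.
by rewrite mulSn (leq_trans _ (leq_addl _ _)) // leq_pmulr.
Qed.

(* Stability of finite monoids: [b] lies in [MaM] and [a] in [Mb], so the
   idempotent power of [u * x] fixes [b] on the left. *)
Lemma stable_left (a b u v x : M) : b = u * a * v -> a = x * b ->
  exists w, b = w * a.
Proof.
move=> def_b def_a; set t := u * x.
have b_pow n : b = mpow t n * b * mpow v n.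
  elim: n => [|n IH]; first by rewrite /= mul1m mulm1.
  rewrite mpowSr -[mpow v n.+1]/(v * mpow v n) {1}IH {1}def_b def_a /t.
  by rewrite !mmulA.
have [n n_gt0 /eqP idem_tn] := exists_idem_mpow t.
have fix_b : mpow t n * b = b by rewrite (b_pow n) !mmulA idem_tn.
case: n n_gt0 fix_b {idem_tn} => // n _ fix_b.
exists (mpow t n * u).
by rewrite -{1}fix_b mpowSr /t def_a !mmulA.
Qed.

End Powers.

Definition converse_monoid (M : finMonoid) : finMonoid :=
  @FinMonoid M (fun x y => mmul y x) (mone M)
    (fun x y z => esym (mmulA z y x)) (@mulm1 M) (@mul1m M).

Section Ideals.
Variable M : finMonoid.
Local Notation "x * y" := (mmul x y).

Lemma stable_right (a b u v y : M) : b = u * a * v -> a = b * y ->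
  exists w, b = a * w.
Proof.
move=> def_b def_a; apply: (@stable_left (converse_monoid M) a b v u y) => //=.
by rewrite def_b mmulA.
Qed.

Lemma memJ (a x : M) : reflect (exists u v, x = u * a * v) (x \in J a).
Proof.
apply: (iffP imset2P) => [[u v _ _ ->]|[u [v ->]]]; first by exists u, v.
by exists u v.
Qed.

Lemma memJ_self (a : M) : a \in J a.
Proof. by apply/memJ; exists (mone M), (mone M); rewrite mul1m mulm1. Qed.

Lemma subJ (a b : M) : a \in J b -> J a \subset J b.
Proof.
move/memJ=> [u [v ->]]; apply/subsetP=> x /memJ [u' [v' ->]].
by apply/memJ; exists (u' * u), (v * v'); rewrite !mmulA.
Qed.

Lemma subJ_mull (a b : M) : J (a * b) \subset J b.
Proof. by apply: subJ; apply/memJ; exists a, (mone M); rewrite mulm1. Qed.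

Lemma subJ_mulr (a b : M) : J (a * b) \subset J a.
Proof. by apply: subJ; apply/memJ; exists (mone M), b; rewrite mul1m. Qed.

Definition submonoid (S : {set M}) : Prop :=
  mone M \in S /\ forall a b, a \in S -> b \in S -> a * b \in S.

Lemma is_idealP (S I : {set M}) :
  reflect (I \subset S /\
           forall s i, s \in S -> i \in I -> s * i \in I /\ i * s \in I)
          (is_ideal_of S I).
Proof.
apply: (iffP andP) => [[sIS /forallP I_ideal]|[sIS I_ideal]]; split=> //.
  by move=> s i sS iI; apply/andP/(implyP (forallP (implyP (I_ideal s) sS) i)).
by apply/forallP=> s; apply/implyP=> sS; apply/forallP=> i; apply/implyP=> iI;
  apply/andP; apply: I_ideal.
Qed.

Definition min_idem (S : {set M}) : M :=
  odflt (mone M) [pick e in minideal S | idem e].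

Section Submonoid.
Variable S : {set M}.
Hypothesis S_submonoid : submonoid S.

Lemma is_ideal_self : is_ideal_of S S.
Proof.
have [_ mulS] := S_submonoid.
by apply/is_idealP; split=> // s i sS iS; rewrite !mulS.
Qed.

Lemma is_idealI (I K : {set M}) :
  is_ideal_of S I -> is_ideal_of S K -> is_ideal_of S (I :&: K).
Proof.
move=> /is_idealP [sIS I_ideal] /is_idealP [_ K_ideal].
apply/is_idealP; split=> [|s i sS]; first exact: subset_trans (subsetIl _ _) sIS.
rewrite !inE => /andP [iI iK].
by have [-> ->] := I_ideal s i sS iI; have [-> ->] := K_ideal s i sS iK.
Qed.

Lemma ideal_meet_neq0 (I K : {set M}) :
  is_ideal_of S I -> is_ideal_of S K -> I != set0 -> K != set0 ->
  I :&: K != set0.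
Proof.
move=> /is_idealP [sIS I_ideal] /is_idealP [sKS K_ideal].
move=> /set0Pn [i iI] /set0Pn [k kK]; apply/set0Pn; exists (i * k); rewrite inE.
have [-> _] := K_ideal i k (subsetP sIS i iI) kK.
by have [_ ->] := I_ideal k i (subsetP sKS k kK) iI.
Qed.

Lemma is_ideal_principal (s : M) : s \in S ->
  is_ideal_of S [set a * s * b | a in S, b in S] &&
  ([set a * s * b | a in S, b in S] != set0).
Proof.
have [S1 mulS] := S_submonoid; move=> sS; apply/andP; split; last first.
  by apply/set0Pn; exists s; apply/imset2P; exists (mone M) (mone M);
    rewrite ?mul1m ?mulm1.
apply/is_idealP; split.
  by apply/subsetP=> x /imset2P [a b aS bS ->]; rewrite !mulS.
move=> c _ cS /imset2P [a b aS bS ->]; split; apply/imset2P.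
  by exists (c * a) b; rewrite ?mulS // !mmulA.
by exists a (b * c); rewrite ?mulS // !mmulA.
Qed.

Lemma exists_least_ideal : exists2 K : {set M},
  is_ideal_of S K && (K != set0) &
  forall I, is_ideal_of S I -> I != set0 -> K \subset I.
Proof.
have S_neq0 : S != set0 by apply/set0Pn; exists (mone M); have [] := S_submonoid.
case: (@arg_minnP _ S (fun I => is_ideal_of S I && (I != set0)) (fun I => #|I|)).
  by rewrite is_ideal_self.
move=> K /andP [K_ideal K_neq0] K_min; exists K; first by rewrite K_ideal.
move=> I I_ideal I_neq0; apply/setIidPl/eqP.
by rewrite eqEcard subsetIl K_min // is_idealI ?ideal_meet_neq0.
Qed.

(* The least ideal contains an idempotent power of any of its elements. *)
Lemma exists_idem_minideal : exists2 e, e \in minideal S & idem e.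
Proof.
have [S1 mulS] := S_submonoid.
have [K /andP [K_ideal /set0Pn [k kK]] K_least] := exists_least_ideal.
have /is_idealP [sKS K_mul] := K_ideal.
have mpowS n : mpow k n \in S.
  by elim: n => [|n IH]; [exact: S1 | rewrite mpowSr mulS // (subsetP sKS)].
have [[//|n] _ idem_kn] := exists_idem_mpow k.
have knK : mpow k n.+1 \in K by rewrite mpowSr; have [] := K_mul _ _ (mpowS n) kK.
exists (mpow k n.+1) => //; rewrite inE (subsetP sKS _ knK) /=.
apply/forallP=> I; apply/implyP=> /andP [I_ideal I_neq0].
exact: subsetP (K_least I I_ideal I_neq0) _ knK.
Qed.

Lemma min_idemP : [/\ min_idem S \in S, idem (min_idem S) &
  forall s, s \in S -> min_idem S \in J s].
Proof.
rewrite /min_idem; case: pickP => [e /andP [e_min idem_e]|no_idem]; last first.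
  have [e e_min idem_e] := exists_idem_minideal.
  by move: (no_idem e); rewrite e_min idem_e.
move: e_min; rewrite inE => /andP [eS /forallP e_in_ideals]; split=> // s sS.
have /imset2P [a b _ _ ->] := implyP (e_in_ideals _) (is_ideal_principal sS).
by apply/memJ; exists a, b.
Qed.

End Submonoid.

Lemma StL_submonoid (m : M) : submonoid (StL m).
Proof.
split=> [|a b]; rewrite !inE ?mul1m //.
by move=> /eqP am /eqP bm; rewrite -mmulA bm am.
Qed.

Lemma StR_submonoid (m : M) : submonoid (StR m).
Proof.
split=> [|a b]; rewrite !inE ?mulm1 //.
by move=> /eqP ma /eqP mb; rewrite mmulA ma mb.
Qed.

Lemma eL_spec (m : M) :
  [/\ eL m * m = m, idem (eL m) & forall e, e * m = m -> eL m \in J e].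
Proof.
have [/[!inE]/eqP eLm idem_eL eL_J] := min_idemP (StL_submonoid m).
by split=> // e em; apply: eL_J; rewrite inE em.
Qed.

Lemma eR_spec (m : M) :
  [/\ m * eR m = m, idem (eR m) & forall e, m * e = m -> eR m \in J e].
Proof.
have [/[!inE]/eqP meR idem_eR eR_J] := min_idemP (StR_submonoid m).
by split=> // e me; apply: eR_J; rewrite inE me.
Qed.

End Ideals.

Lemma homP (M : finMonoid) (e f m : M) : idem e -> idem f ->
  hom e f m <-> mmul f m = m /\ mmul m e = m.
Proof.
move=> /eqP ee /eqP ff; split=> [[x ->]|[fm me]]; last by exists m; rewrite fm me.
by split; rewrite ?mmulA ?ff // -mmulA ee.
Qed.
Arguments homP {M e f m}.

Section Morphisms.
Variable M : finMonoid.
Local Notation "x * y" := (mmul x y).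

Lemma split_monoP (e g h : M) : idem e -> idem g -> hom e g h ->
  split_mono e g h <-> J e \subset J h.
Proof.
move=> idem_e idem_g /(homP idem_e idem_g) [gh he]; split.
  by move=> [r _ rh]; apply: subJ; apply/memJ; exists r, (mone M); rewrite mulm1.
move=> /subsetP/(_ e (memJ_self e))/memJ [u [v def_e]].
have [w def_e'] := stable_left def_e (esym he).
move/eqP: (idem_e) => ee; move/eqP: (idem_g) => gg.
exists (e * w * g); first by apply/homP => //; split; rewrite ?mmulA ?ee // -mmulA gg.
by rewrite -mmulA gh -mmulA -def_e' ee.
Qed.

Lemma split_epiP (g f k : M) : idem g -> idem f -> hom g f k ->
  split_epi g f k <-> J f \subset J k.
Proof.
move=> idem_g idem_f /(homP idem_g idem_f) [fk kg]; split.
  by move=> [s _ ks]; apply: subJ; apply/memJ; exists (mone M), s; rewrite mul1m.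
move=> /subsetP/(_ f (memJ_self f))/memJ [u [v def_f]].
have [w def_f'] := stable_right def_f (esym fk).
move/eqP: (idem_f) => ff; move/eqP: (idem_g) => gg.
exists (g * w * f); first by apply/homP => //; split; rewrite ?mmulA ?gg // -mmulA ff.
by rewrite !mmulA kg -def_f' ff.
Qed.

Lemma split_mono_not_null (e g h : M) : idem e -> idem g -> hom e g h ->
  split_mono e g h -> ~ null h.
Proof.
move=> idem_e idem_g /(homP idem_e idem_g) [_ he] [r _ rh]; apply.
by exists r; rewrite -mmulA rh he.
Qed.

Lemma split_epi_not_null (g f k : M) : idem g -> idem f -> hom g f k ->
  split_epi g f k -> ~ null k.
Proof.
move=> idem_g idem_f /(homP idem_g idem_f) [fk _] [s _ ks]; apply.
by exists s; rewrite ks fk.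
Qed.

End Morphisms.

Section Irreducible.
Variable M : finMonoid.
Local Notation "x * y" := (mmul x y).
Variables e f m : M.
Hypotheses (idem_e : idem e) (idem_f : idem f).

Lemma irreducible_factor (g h k : M) : irreducible e f m ->
  idem g -> hom e g h -> hom g f k -> m = k * h ->
  J e \subset J h \/ J f \subset J k.
Proof.
move=> [_ _ _ irr] idem_g hh hk def_m.
case: (irr g h k idem_g hh hk def_m) => [mono|epi].
  by left; apply/(split_monoP idem_e idem_g hh).
by right; apply/(split_epiP idem_g idem_f hk).
Qed.

Lemma irreducible_not_subJ : irreducible e f m ->
  ~ J e \subset J m /\ ~ J f \subset J m.
Proof.
move=> [hm not_mono not_epi _]; split.
  by move/(split_monoP idem_e idem_f hm).
by move/(split_epiP idem_e idem_f hm).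
Qed.

(* A regular [m = m x m] would factor through the idempotent [y m], where
   [y = e x f]. *)
Lemma irreducible_null : irreducible e f m -> null m.
Proof.
move=> irr [x def_m]; have [hm _ _ _] := irr.
have [fm me] := (homP idem_e idem_f).1 hm.
have [not_mono not_epi] := irreducible_not_subJ irr.
set y := e * x * f.
have mym : m * (y * m) = m.
  by rewrite /y !mmulA me -(mmulA _ f) fm -def_m.
have idem_ym : idem (y * m) by apply/eqP; rewrite -mmulA mym.
have h_ym : hom e (y * m) (y * m).
  by apply/homP => //; split; [apply/eqP | rewrite -mmulA me].
have k_m : hom (y * m) f m by apply/homP.
case: (irreducible_factor irr idem_ym h_ym k_m (esym mym)) => [sub|/not_epi//].
by apply: not_mono; apply: subset_trans sub (subJ_mull _ _).
Qed.

Lemma irreducible_eR : inDG M -> irreducible e f m -> e = eR m.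
Proof.
move=> [_ DG_uniq] irr; have [hm _ _ _] := irr.
have [fm me] := (homP idem_e idem_f).1 hm.
have [_ not_epi] := irreducible_not_subJ irr.
have [meR idem_eR eR_J] := eR_spec m; have /eqP eReR := idem_eR.
have hh : hom e (eR m) (eR m * e).
  by apply/homP => //; split; rewrite ?mmulA ?eReR // -mmulA (eqP idem_e).
have hk : hom (eR m) f m by apply/homP.
have def_m : m = m * (eR m * e) by rewrite mmulA meR me.
case: (irreducible_factor irr idem_eR hh hk def_m) => [sub|/not_epi//].
apply: DG_uniq => //; apply/eqP.
by rewrite eqEsubset (subset_trans sub (subJ_mulr _ _)) subJ // eR_J.
Qed.

Lemma irreducible_eL : inDG M -> irreducible e f m -> f = eL m.
Proof.
move=> [_ DG_uniq] irr; have [hm _ _ _] := irr.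
have [fm me] := (homP idem_e idem_f).1 hm.
have [not_mono _] := irreducible_not_subJ irr.
have [eLm idem_eL eL_J] := eL_spec m; have /eqP eLeL := idem_eL.
have hh : hom e (eL m) m by apply/homP.
have hk : hom (eL m) f (f * eL m).
  by apply/homP => //; split; rewrite ?mmulA ?(eqP idem_f) // -mmulA eLeL.
have def_m : m = f * eL m * m by rewrite -mmulA eLm fm.
case: (irreducible_factor irr idem_eL hh hk def_m) => [/not_mono//|sub].
apply: DG_uniq => //; apply/eqP.
by rewrite eqEsubset (subset_trans sub (subJ_mull _ _)) subJ // eL_J.
Qed.

Lemma irreducible_notin_nablaprod : irreducible e f m ->
  m \notin nablaprod (J f) (J e).
Proof.
move=> irr; have [hm _ _ _] := irr.
have [fm me] := (homP idem_e idem_f).1 hm.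
have idem1 : idem (mone M) by rewrite /idem mul1m.
apply/imset2P=> -[a b]; rewrite !inE => /negP a_nabla /negP b_nabla def_m.
have hh : hom e (mone M) (b * e).
  by apply/homP => //; rewrite mul1m -mmulA (eqP idem_e).
have hk : hom (mone M) f (f * a).
  by apply/homP => //; rewrite mulm1 mmulA (eqP idem_f).
have def_m' : m = f * a * (b * e) by rewrite -mmulA (mmulA a) -def_m me fm.
case: (irreducible_factor irr idem1 hh hk def_m') => sub.
  by apply: b_nabla; apply: subset_trans sub (subJ_mulr _ _).
by apply: a_nabla; apply: subset_trans sub (subJ_mull _ _).
Qed.

Lemma irreducible_of_null : m * e = m -> f * m = m ->
  m \notin nablaprod (J f) (J e) -> null m -> irreducible e f m.
Proof.
move=> me fm m_nabla null_m.
have hm : hom e f m by apply/homP.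
split=> //; first by move=> /(split_mono_not_null idem_e idem_f hm).
  by move=> /(split_epi_not_null idem_e idem_f hm).
move=> g h k idem_g hh hk def_m.
have [sub|not_epi] := boolP (J f \subset J k).
  by right; apply/(split_epiP idem_g idem_f hk).
have [sub|not_mono] := boolP (J e \subset J h).
  by left; apply/(split_monoP idem_e idem_g hh).
by case/negP: m_nabla; apply/imset2P; exists k h; rewrite ?inE.
Qed.

End Irreducible.

Theorem mainTheorem19 (M : finMonoid) (eX eY m : M) :
  inDG M -> idem eX -> idem eY ->
  irreducible eX eY m <->
  [/\ eX = eR m, eY = eL m, m \notin nablaprod (J eY) (J eX) & null m].
Proof.
move=> DG idem_eX idem_eY; split=> [irr|[def_eX def_eY m_nabla null_m]].
  split; [exact: irreducible_eR idem_eX idem_eY DG irr |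
          exact: irreducible_eL idem_eX idem_eY DG irr |
          exact: irreducible_notin_nablaprod idem_eX idem_eY irr |
          exact: irreducible_null idem_eX idem_eY irr].
have [meR _ _] := eR_spec m; have [eLm _ _] := eL_spec m.
by apply: (irreducible_of_null idem_eX idem_eY) => //;
  [rewrite def_eX | rewrite def_eY].
Qed.
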